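(* Let $M$ be a positive integer with $M\not\equiv0\bmod3$, $L$ a positive divisor of $M$ with $L^*>2$, and $\ell$ the number of prime divisors of $L$. Then $J_1(L,M)=\varphi(L^* )\big(M^2/L^*+(-1)^\ell(8-9\epsilon)\big)/24$, where $\epsilon=1$ if $M$ is odd, $\epsilon=2$ if $M\equiv2\bmod4$ and $L^*$ is even, and $\epsilon=0$ otherwise.
   Context: For a positive integer $n$, $n^*$ denotes the product of the distinct prime divisors of $n$, and $\varphi$ is Euler's totient function. For a positive integer $M$, a positive divisor $L$ of $M$ and an integer $k\ge0$, $J_k(L,M)=\sum_u u^k$, the sum over integers $u$ with $0<u<M/2$, $\gcd(u,L)=1$ and $u\equiv -M\bmod 3$. *)

From HB Require Import structures.
From mathcomp Require Import all_boot all_order all_algebra.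
Set Implicit Arguments. Unset Strict Implicit. Unset Printing Implicit Defensive.

Definition radn (n : nat) : nat := \prod_(p <- primes n) p.

Definition J (k L M : nat) : nat :=
  \sum_(1 <= u < M | (2 * u < M) && coprime u L && ((u + M) %% 3 == 0)) u ^ k.

Definition eps (L M : nat) : nat :=
  if odd M then 1
  else if (M %% 4 == 2) && ~~ odd (radn L) then 2 else 0.

(* Inclusion-exclusion over the prime divisors of L.  Let J(s, M) be the sum
   with coprimality to L replaced by "divisible by no prime of s".  For a prime
   p <> 3 dividing M, the multiples u = p v counted in J(s, M) are exactly the
   v counted in J(s, M/p): the range 2u < M becomes 2v < M/p, and since p is a
   unit mod 3 the congruence u = -M becomes v = -M/p.  Hence
   J(s + p, M) = J(s, M) - p J(s, M/p), and the closed formula satisfies the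
   same recursion.  For s = [] the sum is over an arithmetic progression of
   step 3 and is computed by induction M -> M + 6.  The closed formula is only
   exact up to a defect linear in M which is non-zero only for s = [] and
   s = [2], i.e. exactly when L^* <= 2. *)

From mathcomp Require Import all_boot all_algebra.
From mathcomp Require Import zify ring lra.

Set Implicit Arguments.
Unset Strict Implicit.
Unset Printing Implicit Defensive.

Lemma prime_dvd_prod_primes (q : nat) (s : seq nat) : prime q -> all prime s ->
  (q %| \prod_(r <- s) r) = (q \in s).
Proof.
move=> q_pr s_pr; rewrite Euclid_dvd_prod // big_has -has_pred1.
by apply: eq_in_has => r r_in_s; rewrite /= dvdn_prime2 // (allP s_pr).
Qed.

Lemma totient_prod_primes (s : seq nat) : all prime s -> uniq s ->
  totient (\prod_(r <- s) r) = \prod_(r <- s) r.-1.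
Proof.
elim: s => [|r s IH] /=; first by rewrite !big_nil.
move=> /andP[r_pr s_pr] /andP[r_notin_s s_uniq]; rewrite !big_cons totient_coprime.
  by rewrite totient_prime // IH.
by rewrite prime_coprime // prime_dvd_prod_primes.
Qed.

Lemma prod_primes_gt0 (s : seq nat) : all prime s -> 0 < \prod_(r <- s) r.
Proof.
move=> s_pr; rewrite big_seq_cond prodn_cond_gt0 // => r /andP[r_in_s _].
exact: prime_gt0 (allP s_pr r r_in_s).
Qed.

Lemma sum_multiples (p m : nat) (P : pred nat) (F : nat -> nat) : 0 < p ->
  \sum_(0 <= u < p * m | P u && (p %| u)) F u =
  \sum_(0 <= v < m | P (p * v)) F (p * v).
Proof.
move=> p_gt0; elim: m => [|m IH]; first by rewrite muln0 !big_geq.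
rewrite mulnSr (big_cat_nat _ (n := p * m)) ?leq_addr //= IH.
rewrite [RHS]big_mkcond [RHS]big_nat_recr //= -big_mkcond /=; congr (_ + _).
rewrite big_mkcond big_ltn; last by rewrite -{1}(addn0 (p * m)) ltn_add2l.
rewrite (dvdn_mulr _ (dvdnn p)) andbT.
rewrite big_nat_cond big1 ?[LHS]addn0 // => u /andP[/andP[lo hi] _].
case: ifP => // /andP[_ /dvdnP[k def_u]]; move: lo hi; rewrite def_u.
by rewrite [k * p]mulnC -mulnSr !ltn_pmul2l //; lia.
Qed.

(* J_1(L, M) for any L with prime divisors s; the extra term u = 0 is zero. *)
Definition Jsieve (s : seq nat) (M : nat) : nat :=
  \sum_(0 <= u < M | (2 * u < M) && all (fun q => ~~ (q %| u)) s
                     && ((u + M) %% 3 == 0)) u.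

Lemma J1_Jsieve (L M : nat) : 0 < L -> 0 < M -> J 1 L M = Jsieve (primes L) M.
Proof.
move=> L_gt0 M_gt0; rewrite /J /Jsieve [RHS]big_mkcond big_ltn //=.
rewrite [X in X + _]if_same add0n.
rewrite big_mkcond; apply: eq_big_nat => u /andP[u_gt0 _]; rewrite expn1.
rewrite coprime_has_primes // -all_predC; congr (if _ && _ && _ then _ else _).
by apply: eq_in_all => q; rewrite mem_primes => /andP[q_pr _]; rewrite /= mem_primes q_pr u_gt0.
Qed.

Lemma Jsieve_cons (p : nat) (s : seq nat) (M : nat) :
  prime p -> p != 3 -> p \notin s -> all prime s -> p %| M ->
  Jsieve s M = Jsieve (p :: s) M + p * Jsieve s (M %/ p).
Proof.
move=> p_pr p_neq3 p_notin_s s_pr /dvdnP[m ->].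
have p_gt0 := prime_gt0 p_pr; rewrite [m * p]mulnC mulKn //.
rewrite /Jsieve (bigID (fun u => p %| u)) /= addnC; congr (_ + _).
  by apply: eq_bigl => u /=; case: (p %| u); rewrite /= ?andbT ?andbF.
rewrite sum_multiples // big_distrr /=; apply: eq_bigl => v.
have cop3p : coprime 3 p by rewrite prime_coprime // dvdn_prime2 // eq_sym.
rewrite mulnCA ltn_pmul2l // -mulnDr.
have -> : (p * (v + m) %% 3 == 0) = ((v + m) %% 3 == 0).
  by have := Gauss_dvdr (v + m) cop3p; rewrite /dvdn.
congr (_ && _ && _); apply: eq_in_all => q q_in_s /=.
have q_pr := allP s_pr q q_in_s.
rewrite Euclid_dvdM // dvdn_prime2 //.
by case: eqP p_notin_s => // <-; rewrite q_in_s.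
Qed.

Lemma Jsieve_nilE (M : nat) :
  Jsieve [::] M = \sum_(0 <= u < M.+1 %/ 2 | (u + M) %% 3 == 0) u.
Proof.
rewrite /Jsieve [RHS](@big_nat_widen _ _ _ 0 (M.+1 %/ 2) M); last lia.
by apply: eq_bigl => u /=; rewrite andbT andbC; congr (_ && _); apply/idP/idP; lia.
Qed.

Lemma Jsieve_nil (M : nat) : M %% 3 != 0 ->
  24 * Jsieve [::] M + (if odd M then 1 else 6 * M) =
  M ^ 2 + (if odd M then 0 else 8).
Proof.
elim/ltn_ind: M => M IH M_mod3.
have [M_lt6 | M_ge6] := ltnP M 6.
  by move: M_lt6 M_mod3; case: M {IH} => [|[|[|[|[|[|]]]]]] //= _ _;
     rewrite Jsieve_nilE unlock.
have [N def_M] : exists N, M = N + 6 by exists (M - 6); lia.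
subst M.
have N_mod3 : N %% 3 != 0 by move: M_mod3; lia.
have N_lt : N < N + 6 by rewrite addnS ltnS leq_addr.
have := IH N N_lt N_mod3; rewrite !Jsieve_nilE {IH}.
rewrite (_ : (N + 6).+1 %/ 2 = (N.+1 %/ 2).+3); last lia.
move=> IH_N; rewrite big_mkcond !big_nat_recr //= -big_mkcond /=.
rewrite (eq_bigl (fun u => (u + N) %% 3 == 0)); last first.
  by move=> u; apply/idP/idP => /eqP H; apply/eqP; lia.
set S := \sum_(0 <= u < _ | _) _; rewrite oddD addbF.
have -> : (N + 6) ^ 2 = N ^ 2 + 12 * N + 36 by ring.
move: IH_N (modn2 N); case: (odd N) => /= IH_N N_mod2; repeat case: eqP => ?; lia.
Qed.

Lemma half_mul_even (p m : nat) : ~~ odd m -> (p * m)./2 = p * m./2.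
Proof.
by move=> /negbTE m_even; rewrite -{1}(odd_double_half m) m_even -doubleMr doubleK.
Qed.

Lemma mod4_half (M : nat) : ~~ odd M -> (M %% 4 == 2) = odd M./2.
Proof.
move=> /negbTE M_even; have def_M := odd_double_half M.
rewrite M_even add0n in def_M; rewrite -{1}def_M -muln2.
by move: (modn2 M./2); case: (odd _) => /= half_mod2; [apply/eqP | apply/negbTE/eqP]; lia.
Qed.

Definition eps_seq (s : seq nat) (M : nat) : nat :=
  if odd M then 1 else if odd M./2 && (2 \in s) then 2 else 0.

Lemma eps_seq_cons_odd (p : nat) (s : seq nat) (M : nat) :
  odd p -> eps_seq (p :: s) M = eps_seq s M.
Proof. by case: p => // -[|[|p]] //= _; rewrite /eps_seq in_cons. Qed.

Lemma eps_seq_mull_odd (p : nat) (s : seq nat) (m : nat) :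
  odd p -> eps_seq s (p * m) = eps_seq s m.
Proof.
move=> p_odd; rewrite /eps_seq oddM p_odd /=.
by case: ifP => // /negbT m_even; rewrite half_mul_even // oddM p_odd.
Qed.

Import GRing.Theory Num.Theory.

Section SieveFormula.
Local Open Scope ring_scope.

Definition sieve_defect (s : seq nat) (M : nat) : rat :=
  match s with
  | [::] => if odd M then 0 else - M%:R / 4
  | [:: 2%N] => if odd M || ~~ odd M./2 then 0 else - M%:R / 4
  | _ => 0
  end.

Definition sieve_formula (s : seq nat) (M : nat) : rat :=
  (\prod_(r <- s) r.-1)%N%:R
    * ((M ^ 2)%N%:R / (\prod_(r <- s) r)%N%:R
       + (-1) ^+ size s * (8 - 9 * (eps_seq s M)%:R)) / 24
  + sieve_defect s M.

Lemma sieve_defect_cons_odd (p : nat) (s : seq nat) (M : nat) :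
  odd p -> sieve_defect (p :: s) M = 0.
Proof. by case: p => // -[|[|p]] //; case: s. Qed.

Lemma sieve_defect_mull_odd (p : nat) (s : seq nat) (m : nat) :
  odd p -> sieve_defect s (p * m) = p%:R * sieve_defect s m.
Proof.
move=> p_odd; rewrite /sieve_defect oddM p_odd /=.
case: ifP => [|/negbT m_even]; first by case: s => [|[|[|[|]]] []]; rewrite mulr0.
rewrite half_mul_even // oddM p_odd natrM /=.
by case: s => [|[|[|[|q]]] []] /=; rewrite ?mulr0 //; try case: ifP => _; rewrite ?mulr0 //; ring.
Qed.

Lemma sieve_formula_cons_odd (p : nat) (s : seq nat) (m : nat) :
  prime p -> odd p -> all prime s ->
  sieve_formula (p :: s) (p * m) = sieve_formula s (p * m) - p%:R * sieve_formula s m.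
Proof.
move=> p_pr p_odd s_pr; rewrite /sieve_formula eps_seq_cons_odd //.
rewrite eps_seq_mull_odd // sieve_defect_cons_odd // sieve_defect_mull_odd //.
rewrite !big_cons !natrM -subn1 natrB ?prime_gt0 //= exprS.
have p_neq0 : p%:R != 0 :> rat by rewrite pnatr_eq0 -lt0n prime_gt0.
have R_neq0 : (\prod_(r <- s) r)%N%:R != 0 :> rat.
  by rewrite pnatr_eq0 -lt0n prod_primes_gt0.
by field; rewrite R_neq0 p_neq0.
Qed.

Lemma sieve_defect_cons2 (s : seq nat) (m : nat) : 2 \notin s ->
  sieve_defect (2 :: s) (2 * m) = sieve_defect s (2 * m) - 2%:R * sieve_defect s m.
Proof.
case: s => [_ | q s].
  rewrite /sieve_defect /= oddM /= mul2n doubleK -mul2n natrM.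
  by case: (odd m) => /=; ring.
rewrite in_cons negb_or => /andP[q_neq2 _].
have defect0 M : sieve_defect (q :: s) M = 0.
  by case: q q_neq2 => [|[|[|q]]] //; case: s.
by rewrite !defect0 /= mulr0 subr0.
Qed.

Lemma sieve_formula_cons2 (s : seq nat) (m : nat) : 2 \notin s -> all prime s ->
  sieve_formula (2 :: s) (2 * m) = sieve_formula s (2 * m) - 2%:R * sieve_formula s m.
Proof.
move=> s_not2 s_pr; rewrite /sieve_formula sieve_defect_cons2 //.
have -> : eps_seq s (2 * m) = 0%N by rewrite /eps_seq oddM mul2n doubleK (negbTE s_not2) andbF.
have -> : eps_seq s m = odd m by rewrite /eps_seq (negbTE s_not2) andbF; case: (odd m).
have -> : eps_seq (2 :: s) (2 * m) = (odd m).*2 by rewrite /eps_seq oddM mul2n doubleK mem_head andbT; case: (odd m).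
rewrite !big_cons !natrM /= exprS -!muln2 !natrM.
have R_neq0 : (\prod_(r <- s) r)%N%:R != 0 :> rat.
  by rewrite pnatr_eq0 -lt0n prod_primes_gt0.
by field; rewrite R_neq0.
Qed.

Lemma sieve_formula_cons (p : nat) (s : seq nat) (m : nat) :
  prime p -> p \notin s -> all prime s ->
  sieve_formula (p :: s) (p * m) = sieve_formula s (p * m) - p%:R * sieve_formula s m.
Proof.
move=> p_pr p_notin_s s_pr.
by case: (even_prime p_pr) => [p2 | p_odd];
  [subst p; exact: sieve_formula_cons2 | exact: sieve_formula_cons_odd].
Qed.

Lemma Jsieve_nil_formula (M : nat) : (M %% 3 != 0)%N ->
  (Jsieve [::] M)%:R = sieve_formula [::] M.
Proof.
move=> /Jsieve_nil /(congr1 (fun n => n%:R : rat)).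
rewrite /sieve_formula /eps_seq /sieve_defect !big_nil in_nil andbF natrX.
by case: (odd M); rewrite !natrD !natrM; lra.
Qed.

Lemma Jsieve_formula (s : seq nat) (M : nat) :
  uniq s -> all prime s -> 3 \notin s -> all (dvdn^~ M) s ->
  (0 < M)%N -> (M %% 3 != 0)%N -> (Jsieve s M)%:R = sieve_formula s M.
Proof.
elim: s M => [|p s IH] M; first by move=> *; exact: Jsieve_nil_formula.
move=> /andP[p_notin_s s_uniq] /andP[p_pr s_pr].
rewrite in_cons negb_or eq_sym => /andP[p_neq3 s_not3] /andP[p_dvd_M s_dvd_M].
move=> M_gt0 M_mod3; move: (p_dvd_M) => /dvdnP[m def_M].
rewrite mulnC in def_M; subst M.
have m_gt0 : (0 < m)%N by rewrite muln_gt0 in M_gt0; case/andP: M_gt0.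
have m_mod3 : (m %% 3 != 0)%N by apply: contra M_mod3; exact: dvdn_mull.
have s_dvd_m : all (dvdn^~ m) s.
  apply/allP => q q_in_s; have q_pr := allP s_pr q q_in_s.
  rewrite /= -(Gauss_dvdr _ (_ : coprime q p)); first exact: (allP s_dvd_M q q_in_s).
  by rewrite prime_coprime // dvdn_prime2 //; apply: contraNneq p_notin_s => <-.
have := Jsieve_cons p_pr p_neq3 p_notin_s s_pr p_dvd_M.
rewrite mulKn ?prime_gt0 // sieve_formula_cons // => /(congr1 (fun n => n%:R : rat)).
by rewrite natrD natrM !IH // => ->; rewrite addrK.
Qed.

Lemma sieve_defect_prod_gt2 (s : seq nat) (M : nat) :
  (2 < \prod_(r <- s) r)%N -> sieve_defect s M = 0.
Proof. by case: s => [|[|[|[|q]]] []]; rewrite ?big_nil ?big_seq1. Qed.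

End SieveFormula.


Lemma eps_seq_primes (L M : nat) : eps_seq (primes L) M = eps L M.
Proof.
rewrite /eps_seq /eps; case: ifP => // /negbT M_even.
rewrite mod4_half // /radn -dvdn2 prime_dvd_prod_primes //.
by apply/allP => q; rewrite mem_primes => /andP[].
Qed.

Theorem propositionA3 (M L : nat) :
  0 < M -> M %% 3 != 0 -> 0 < L -> L %| M -> 2 < radn L ->
  ((J 1 L M)%:R : rat) =
    ((totient (radn L))%:R *
      (((M ^ 2)%N)%:R / (radn L)%:R
       + (-1) ^+ size (primes L) * (8 - 9 * (eps L M)%:R)) / 24)%R.
Proof.
move=> M_gt0 M_mod3 L_gt0 L_dvd_M rad_gt2.
have primes_L_pr : all prime (primes L).
  by apply/allP => q; rewrite mem_primes => /andP[].
have primes_L_dvd_M : all (dvdn^~ M) (primes L).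
  by apply/allP => q; rewrite mem_primes => /and3P[_ _ /dvdn_trans]; apply.
have primes_L_not3 : 3 \notin primes L.
  by apply: contra M_mod3 => /(allP primes_L_dvd_M).
rewrite J1_Jsieve // Jsieve_formula ?primes_uniq // /sieve_formula.
rewrite sieve_defect_prod_gt2 // eps_seq_primes /radn totient_prod_primes ?primes_uniq //.
by rewrite addr0.
Qed.
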